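(* Let $K$ be any field, let $L\subset\mathbb{Z}^m$ be a non-zero lattice with $L\cap\mathbb{N}^m=\{\mathbf 0\}$, and let $I_L\subset K[x_1,\ldots,x_m]$ be its lattice ideal. If $F_1,\ldots,F_s\in I_L$ are polynomials with $\mathrm{rad}(I_L)=\mathrm{rad}(F_1,\ldots,F_s)$, then $\bigcup_{i=1}^{s}\Gamma_L(F_i)$ is a spanning subcomplex of $\Gamma_L$.
   Context: For $\mathbf u\in\mathbb{N}^m$ write $\mathbf x^{\mathbf u}=x_1^{u_1}\cdots x_m^{u_m}$; for $\mathbf u\in\mathbb{Z}^m$, $\mathbf u_+,\mathbf u_-\in\mathbb{N}^m$ are its positive and negative parts ($\mathbf u=\mathbf u_+-\mathbf u_-$). The lattice ideal is $I_L=(\mathbf x^{\mathbf u_+}-\mathbf x^{\mathbf u_-}:\mathbf u\in L)$. The saturation is $\mathrm{Sat}(L)=\{\mathbf u\in\mathbb{Z}^m: d\mathbf u\in L\text{ for some nonzero }d\in\mathbb{Z}\}$, and $\mathcal{A}=\{\mathbf a_1,\ldots,\mathbf a_m\}\subset\mathbb{Z}^n$ is a vector configuration with $\mathrm{Sat}(L)=\ker_{\mathbb{Z}}(\mathcal{A})=\{\mathbf q\in\mathbb{Z}^m:\sum q_i\mathbf a_i=\mathbf 0\}$. The $\mathcal{A}$-degree of $\mathbf x^{\mathbf u}$ is $\sum u_i\mathbf a_i$. The support of $\mathbf v\in\mathbb{Z}^m$ is $\mathrm{supp}(\mathbf v)=\{i:v_i\neq0\}$, and $\mathrm{supp}(\mathbf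 x^{\mathbf w})=\mathrm{supp}(\mathbf w)$. A monomial $M$ is an indispensable monomial of $I_L$ if every system of binomial generators of $I_L$ contains a binomial having $M$ as one of its monomials. Let $\mathcal{T}$ be the set of supports of indispensable monomials of $I_L$ and $\mathcal{T}_{\min}$ the set of inclusion-minimal elements of $\mathcal{T}$. The simplicial complex $\Gamma_L$ has vertex set $\mathcal{T}_{\min}$, and a subset $\{E_1,\ldots,E_k\}\subseteq\mathcal{T}_{\min}$ is a face iff there exist monomials $M_1,\ldots,M_k$ with $\mathrm{supp}(M_i)=E_i$ all having the same $\mathcal{A}$-degree. For a polynomial $F$, $\Gamma_L(F)$ is the induced subcomplex of $\Gamma_L$ on the vertices $E\in\mathcal{T}_{\min}$ such that $E=\mathrm{supp}(M)$ for some monomial $M$ occurring in $F$. A subcomplex is spanning if it has the same vertex set as $\Gamma_L$. *)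

From HB Require Import structures.
From mathcomp Require Import all_boot all_order all_algebra.
From mathcomp Require Import mpoly.
Set Implicit Arguments. Unset Strict Implicit. Unset Printing Implicit Defensive.
Import Order.TTheory GRing.Theory Num.Theory.
Local Open Scope ring_scope.

Section LatticeIdeals.
Variables (K : fieldType) (m : nat).

Definition is_lattice (L : 'rV[int]_m -> Prop) : Prop :=
  [/\ L 0, (forall u v, L u -> L v -> L (u + v)) & (forall u, L u -> L (- u))].

Definition pos_part (u : 'rV[int]_m) : 'X_{1..m} :=
  [multinom `|Num.max (u ord0 i) 0|%N | i < m].
Definition neg_part (u : 'rV[int]_m) : 'X_{1..m} :=
  [multinom `|Num.max (- u ord0 i) 0|%N | i < m].

Definition lbinom (u : 'rV[int]_m) : {mpoly K[m]} :=
  'X_[pos_part u] - 'X_[neg_part u].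

Definition ideal_gen (G : {mpoly K[m]} -> Prop) (f : {mpoly K[m]}) : Prop :=
  exists s : seq ({mpoly K[m]} * {mpoly K[m]}),
    (forall p, p \in s -> G p.2) /\ f = \sum_(p <- s) p.1 * p.2.

Definition lattice_ideal (L : 'rV[int]_m -> Prop) : {mpoly K[m]} -> Prop :=
  ideal_gen (fun b => exists2 u, L u & b = lbinom u).

Definition radical (I : {mpoly K[m]} -> Prop) (f : {mpoly K[m]}) : Prop :=
  exists n : nat, I (f ^+ n).

Definition saturation (L : 'rV[int]_m -> Prop) (u : 'rV[int]_m) : Prop :=
  exists2 d : int, d != 0 & L (d *: u).

Definition is_binomial (f : {mpoly K[m]}) : Prop :=
  exists u v : 'X_{1..m}, f = 'X_[u] - 'X_[v].

Definition indispensable_monomial (L : 'rV[int]_m -> Prop) (M : 'X_{1..m}) : Prop :=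
  forall S : {mpoly K[m]} -> Prop,
    (forall f, S f -> is_binomial f) ->
    (forall f, ideal_gen S f <-> lattice_ideal L f) ->
    exists2 f, S f & M \in msupp f.

Definition msupport (u : 'X_{1..m}) : {set 'I_m} := [set i | u i != 0%N].

Definition T_supp (L : 'rV[int]_m -> Prop) (E : {set 'I_m}) : Prop :=
  exists2 M, indispensable_monomial L M & msupport M = E.
Definition T_min (L : 'rV[int]_m -> Prop) (E : {set 'I_m}) : Prop :=
  T_supp L E /\ (forall E', T_supp L E' -> E' \subset E -> E' = E).

Definition Adeg (n : nat) (A : 'I_m -> 'rV[int]_n) (u : 'X_{1..m}) : 'rV[int]_n :=
  \sum_(i < m) (u i)%:Z *: A i.

(* simplicial complexes on vertices {set 'I_m}: given by their faces *)
Definition complex := {set {set 'I_m}} -> Prop.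

Definition Gamma (L : 'rV[int]_m -> Prop) (n : nat) (A : 'I_m -> 'rV[int]_n) : complex :=
  fun sigma =>
    (forall E, E \in sigma -> T_min L E) /\
    exists (Mon : {set 'I_m} -> 'X_{1..m}) (d : 'rV[int]_n),
      forall E, E \in sigma -> msupport (Mon E) = E /\ Adeg A (Mon E) = d.

Definition vertices_of_poly (L : 'rV[int]_m -> Prop) (F : {mpoly K[m]})
  (E : {set 'I_m}) : Prop :=
  T_min L E /\ exists2 M, M \in msupp F & msupport M = E.

Definition Gamma_F (L : 'rV[int]_m -> Prop) (n : nat) (A : 'I_m -> 'rV[int]_n)
  (F : {mpoly K[m]}) : complex :=
  fun sigma => Gamma L A sigma /\ (forall E, E \in sigma -> vertices_of_poly L F E).

Definition complex_union (s : nat) (D : 'I_s -> complex) : complex :=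
  fun sigma => exists i, D i sigma.

Definition vertex (D : complex) (E : {set 'I_m}) : Prop := D [set E].

Definition subcomplex (D1 D2 : complex) : Prop := forall sigma, D1 sigma -> D2 sigma.

Definition spanning_subcomplex (D1 D2 : complex) : Prop :=
  subcomplex D1 D2 /\ (forall E, vertex D1 E <-> vertex D2 E).

End LatticeIdeals.

From HB Require Import structures.
From mathcomp Require Import all_boot all_order all_algebra.
From mathcomp Require Import mpoly zify.
From Stdlib Require Import Classical.
Set Implicit Arguments. Unset Strict Implicit. Unset Printing Implicit Defensive.
Import Order.TTheory GRing.Theory Num.Theory.
Local Open Scope ring_scope.

(* Let E be a minimal support of an indispensable monomial and kill the
   variables outside E.  Every x^{v+} with v in L \ 0 is divisible by an
   indispensable monomial, so by minimality of E it either dies or has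
   support exactly E; hence the image of I_L lies in the ideal (x^{1_E}).
   If no F_i had a monomial with support E, every F_i would therefore die,
   and so would rad(F_1, ..., F_s) = rad(I_L).  But an indispensable
   binomial x^{w+} - x^{w-} with supp(w+) = E survives as x^{w+}: since
   L meets N^m only in 0, w- is nonzero and its support avoids E. *)

Section Restriction.
Variables (K : fieldType) (m : nat) (E : {set 'I_m}).
Implicit Types (p : {mpoly K[m]}) (a : 'X_{1..m}).

Definition restrict_var (i : 'I_m) : {mpoly K[m]} := if i \in E then 'X_i else 0.

Definition mrestrict : {mpoly K[m]} -> {mpoly K[m]} :=
  mmap (@mpolyC m K) restrict_var.

HB.instance Definition _ := GRing.RMorphism.on mrestrict.

Lemma mrestrictX a :
  mrestrict 'X_[a] = if msupport a \subset E then 'X_[a] else 0.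
Proof.
rewrite /mrestrict mmapX /mmap1; case: ifP => [/subsetP sub|/negbT].
  rewrite mpolyXE_id; apply: eq_bigr => i _; rewrite /restrict_var.
  case: ifP => // iE; have : i \notin msupport a by apply/negP => /sub; rewrite iE.
  by rewrite inE negbK => /eqP ->; rewrite !expr0.
case/subsetPn => i; rewrite inE => ai iE.
by rewrite (bigD1 i) //= /restrict_var (negbTE iE) expr0n (negbTE ai) mul0r.
Qed.

Lemma mcoeff_mrestrict p a :
  (mrestrict p)@_a = if msupport a \subset E then p@_a else 0.
Proof.
elim/mpolyind: p => [|c b p _ _ IH]; first by rewrite rmorph0 mcoeff0; case: ifP.
rewrite rmorphD /= {1}/mrestrict mmapZ -/mrestrict mul_mpolyC.
rewrite mrestrictX !mcoeffD !mcoeffZ IH.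
case: (boolP (msupport b \subset E)) => hb; case: (boolP (msupport a \subset E)) => ha;
  rewrite ?mcoeffX ?mcoeff0 ?mulr0 ?addr0 ?add0r //.
- by rewrite (_ : (b == a) = false) ?mulr0 //; apply: contraNF ha => /eqP <-.
- by rewrite (_ : (b == a) = false) ?mulr0 ?add0r //; apply: contraNF hb => /eqP ->.
Qed.

End Restriction.

Section Monomials.
Variable m : nat.
Implicit Types a b : 'X_{1..m}.

Lemma lepm_anti a b : (a <= b)%MM -> (b <= a)%MM -> a = b.
Proof.
move=> /mnm_lepP h1 /mnm_lepP h2; apply/mnmP => i.
by apply/eqP; rewrite eqn_leq h1 h2.
Qed.

Lemma lepm_mdeg_lt a b : (a <= b)%MM -> a != b -> (mdeg a < mdeg b)%N.
Proof.
move=> le ne; rewrite -(submK le) mdegD.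
have : (b - a)%MM != 0%MM.
  by apply: contra ne => /eqP e; rewrite -(submK le) e add0m.
rewrite -mdeg_eq0; lia.
Qed.

Lemma msupportS a b : (a <= b)%MM -> msupport a \subset msupport b.
Proof. by move=> /mnm_lepP h; apply/subsetP => i; rewrite !inE; have := h i; lia. Qed.

Definition mnm_of_set (E : {set 'I_m}) : 'X_{1..m} := [multinom (i \in E : nat) | i < m].

Lemma mnm_of_set_lepm E a : msupport a = E -> (mnm_of_set E <= a)%MM.
Proof.
move=> <-; apply/mnm_lepP => i; rewrite mnmE inE.
by case: (a i).
Qed.

Lemma msupport_mnm_of_setD E a : msupport (mnm_of_set E + a)%MM = E :|: msupport a.
Proof. by apply/setP => i; rewrite !inE mnmDE mnmE; case: (i \in E). Qed.

End Monomials.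

Section Ideals.
Variables (K : fieldType) (m : nat).
Implicit Types (G : {mpoly K[m]} -> Prop) (p : {mpoly K[m]}).

Lemma ideal_gen_mem G g : G g -> ideal_gen G g.
Proof.
move=> Gg; exists [:: (1, g)]; split; first by move=> p; rewrite inE => /eqP ->.
by rewrite big_seq1 mul1r.
Qed.

Lemma msupp_ideal_gen G p a : ideal_gen G p -> a \in msupp p ->
  exists2 g, G g & exists2 e, e \in msupp g & (e <= a)%MM.
Proof.
case=> s [+ ->]; elim: s => [|q s IH] Gs; first by rewrite big_nil msupp0.
rewrite big_cons mcoeff_msupp mcoeffD.
case: (boolP ((q.1 * q.2)@_a == 0)) => [/eqP ->|hq]; rewrite ?add0r.
  by rewrite -mcoeff_msupp; apply: IH => r rs; apply: Gs; rewrite inE rs orbT.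
move=> _; exists q.2; first by apply: Gs; rewrite mem_head.
move: hq; rewrite -mcoeff_msupp => /msuppM_le /allpairsP [[e1 e2] /= [_ he2 ->]].
by exists e2 => //; apply: lem_addl.
Qed.

Lemma rmorph_ideal_gen_mul (S : comNzRingType) (f : {rmorphism {mpoly K[m]} -> S})
    G (q : S) p :
  (forall g, G g -> exists h, f g = h * q) -> ideal_gen G p -> exists h, f p = h * q.
Proof.
move=> fG [s [+ ->]]; elim: s => [|r s IH] Gs.
  by exists 0; rewrite big_nil rmorph0 mul0r.
have [h1 e1] := fG _ (Gs r (mem_head _ _)).
have [h2 e2] : exists h2, f (\sum_(r <- s) r.1 * r.2) = h2 * q.
  by apply: IH => r' r's; apply: Gs; rewrite inE r's orbT.
by exists (f r.1 * h1 + h2); rewrite big_cons rmorphD rmorphM e1 e2 mulrDl mulrA.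
Qed.

Lemma rmorph_ideal_gen_eq0 (S : comNzRingType) (f : {rmorphism {mpoly K[m]} -> S}) G p :
  (forall g, G g -> f g = 0) -> ideal_gen G p -> f p = 0.
Proof.
move=> fG /(rmorph_ideal_gen_mul (f := f) (q := 0)) [g|h ->]; last by rewrite mulr0.
by move=> /fG ->; exists 0; rewrite mulr0.
Qed.

End Ideals.

Section LatticeBinomials.
Variables (K : fieldType) (m : nat).
Implicit Types u w : 'rV[int]_m.

Lemma pos_partN u : pos_part (- u) = neg_part u.
Proof. by apply/mnmP => i; rewrite !mnmE mxE. Qed.

Lemma pos_part_neq_neg u : u != 0 -> pos_part u != neg_part u.
Proof.
move=> nz; apply: contra nz => /eqP e; apply/eqP/rowP => i.
have := congr1 (fun a : 'X_{1..m} => a i) e; rewrite /= !mnmE !mxE => ei.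
by have : u ord0 i = 0 by lia.
Qed.

Lemma neg_part_eq0 u i : pos_part u i != 0%N -> neg_part u i = 0%N.
Proof. rewrite !mnmE; lia. Qed.

Lemma lbinom0 : lbinom K (0 : 'rV[int]_m) = 0.
Proof. by rewrite /lbinom -pos_partN oppr0 subrr. Qed.

Lemma msupp_lbinom u a :
  a \in msupp (lbinom K u) -> a = pos_part u \/ a = neg_part u.
Proof.
rewrite mcoeff_msupp /lbinom mcoeffB !mcoeffX.
case: (eqVneq (pos_part u) a) => [<-|_]; first by left.
case: (eqVneq (neg_part u) a) => [<-|_]; first by right.
by rewrite subrr eqxx.
Qed.

Lemma pos_part_msupp_lbinom u : u != 0 -> pos_part u \in msupp (lbinom K u).
Proof.
move=> nz; rewrite mcoeff_msupp /lbinom mcoeffB !mcoeffX eqxx.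
by rewrite [neg_part u == _]eq_sym (negbTE (pos_part_neq_neg nz)) subr0 oner_eq0.
Qed.

Variable L : 'rV[int]_m -> Prop.
Hypothesis HL : is_lattice L.

Lemma is_lattice_opp u : L u -> L (- u).
Proof. by case: HL => _ _; apply. Qed.

Lemma msupp_lbinom_pos_part u a : L u -> a \in msupp (lbinom K u) ->
  exists2 w, L w /\ w != 0 & a = pos_part w.
Proof.
move=> Lu ha; have nz : u != 0.
  by apply: contraTneq ha => ->; rewrite lbinom0 msupp0.
case: (msupp_lbinom ha) => ->; first by exists u.
by exists (- u); rewrite ?pos_partN // oppr_eq0; split; [exact: is_lattice_opp|].
Qed.

Lemma lbinom_is_binomial u : is_binomial (lbinom K u).
Proof. by exists (pos_part u), (neg_part u). Qed.

End LatticeBinomials.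

Section Indispensable.
Variables (K : fieldType) (m : nat) (L : 'rV[int]_m -> Prop).
Hypothesis HL : is_lattice L.

(* in any generating set, x^{w+} is a multiple of a monomial of some generator,
   which in turn is a multiple of some x^{w'+}; minimality closes the chain *)
Lemma min_pos_part_indispensable w : L w -> w != 0 ->
  (forall w', L w' -> w' != 0 -> (pos_part w' <= pos_part w)%MM -> pos_part w' = pos_part w) ->
  indispensable_monomial K L (pos_part w).
Proof.
move=> Lw nz wmin S _ genS.
have /msupp_ideal_gen : ideal_gen S (lbinom K w).
  by apply/genS/ideal_gen_mem; exists w.
move=> /(_ _ (pos_part_msupp_lbinom K nz)) [g Sg [b hb le_bw]].
have /msupp_ideal_gen /(_ hb) [_ [u Lu ->] [e he le_eb]] : lattice_ideal L g.
  by apply/genS/ideal_gen_mem.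
have [w' [Lw' nz'] ew'] := msupp_lbinom_pos_part HL Lu he; subst e.
have /wmin eqw := lepm_trans le_eb le_bw.
exists g => //; suff -> : pos_part w = b by [].
by apply: lepm_anti le_bw; rewrite -(eqw Lw' nz').
Qed.

Lemma indispensable_lepm_pos_part v : L v -> v != 0 ->
  exists2 M, indispensable_monomial K L M & (M <= pos_part v)%MM.
Proof.
have [N] := ubnP (mdeg (pos_part v)); elim: N v => [//|N IH] v ltvN Lv nz.
case: (classic (exists w, [/\ L w, w != 0, (pos_part w <= pos_part v)%MM
                              & pos_part w != pos_part v])) => [[w [Lw nzw le ne]]|nosmaller].
  have [|M HM leM] := IH w _ Lw nzw; first by have := lepm_mdeg_lt le ne; lia.
  by exists M => //; apply: lepm_trans le.
exists (pos_part v); last exact: lepm_refl.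
apply: min_pos_part_indispensable => // w Lw nzw le.
by apply/eqP/contraT => ne; case: nosmaller; exists w.
Qed.

Lemma indispensable_pos_part M : indispensable_monomial K L M ->
  exists2 w, L w /\ w != 0 & M = pos_part w.
Proof.
move=> /(_ (fun f => exists2 u, L u & f = lbinom K u)).
case=> [f [u _ ->]|//|_ [u Lu ->]]; first exact: lbinom_is_binomial.
exact: msupp_lbinom_pos_part.
Qed.

Lemma T_min_pos_part E v : T_min K L E -> L v -> v != 0 ->
  msupport (pos_part v) \subset E -> msupport (pos_part v) = E.
Proof.
move=> [_ Emin] Lv nz sub.
have [M HM le] := indispensable_lepm_pos_part Lv nz.
have eM := Emin (msupport M) (ex_intro2 _ _ M HM erefl) (subset_trans (msupportS le) sub).
by apply/eqP; rewrite eqEsubset sub /= -{1}eM msupportS.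
Qed.

End Indispensable.

Section MinimalSupport.
Variables (K : fieldType) (m : nat) (L : 'rV[int]_m -> Prop) (E : {set 'I_m}).
Hypotheses (HL : is_lattice L) (TE : T_min K L E).
Implicit Type f : {mpoly K[m]}.

Lemma mrestrict_pos_part v : L v -> v != 0 ->
  exists h, mrestrict E ('X_[pos_part v] : {mpoly K[m]}) = h * 'X_[mnm_of_set E].
Proof.
move=> Lv nz; rewrite mrestrictX; case: ifP => sub; last by exists 0; rewrite mul0r.
have /mnm_of_set_lepm le := T_min_pos_part HL TE Lv nz sub.
by exists 'X_[pos_part v - mnm_of_set E]; rewrite -mpolyXD submK.
Qed.

Lemma mrestrict_lattice_ideal f : lattice_ideal L f ->
  exists h, mrestrict E f = h * 'X_[mnm_of_set E].
Proof.
move=> If; apply: (rmorph_ideal_gen_mul (f := mrestrict E)) If => _ [u Lu ->].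
have [->|nz] := eqVneq u 0; first by exists 0; rewrite lbinom0 rmorph0 mul0r.
have [h1 e1] := mrestrict_pos_part Lu nz.
have nzN : - u != 0 by rewrite oppr_eq0.
have [h2 e2] := mrestrict_pos_part (is_lattice_opp HL Lu) nzN.
by exists (h1 - h2); rewrite /lbinom rmorphB /= -pos_partN e1 e2 mulrBl.
Qed.

Lemma msupp_lattice_ideal f a : lattice_ideal L f ->
  a \in msupp f -> msupport a \subset E -> msupport a = E.
Proof.
move=> /mrestrict_lattice_ideal [h eh] ha sub.
have : (mrestrict E f)@_a != 0 by rewrite mcoeff_mrestrict sub -mcoeff_msupp.
rewrite eh -mcoeff_msupp (perm_mem (msuppMX _ _)) => /mapP [a' _ ea].
by apply/eqP; rewrite eqEsubset sub ea msupport_mnm_of_setD subsetUl.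
Qed.

Lemma mrestrict_lattice_ideal_eq0 f : lattice_ideal L f ->
  (forall a, a \in msupp f -> msupport a != E) -> mrestrict E f = 0.
Proof.
move=> If noE; apply/mpolyP => a; rewrite mcoeff_mrestrict mcoeff0.
case: ifP => // sub; apply/eqP; rewrite mcoeff_eq0; apply/negP => ha.
by move/eqP: (noE a ha); apply; apply: msupp_lattice_ideal If ha sub.
Qed.

Hypothesis Lpos : forall u, L u -> (forall i, 0 <= u ord0 i) -> u = 0.

Lemma mrestrict_lbinom w : L w -> w != 0 -> msupport (pos_part w) = E ->
  mrestrict E (lbinom K w) = 'X_[pos_part w].
Proof.
move=> Lw nz suppE; rewrite /lbinom rmorphB /= !mrestrictX suppE subxx.
suff /negbTE -> : ~~ (msupport (neg_part w) \subset E) by rewrite subr0.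
have [i wi] : exists i, neg_part w i != 0%N.
  apply/existsP; apply: contraR nz => /existsPn wneg; apply/eqP/Lpos => // i.
  by have := wneg i; rewrite negbK mnmE; lia.
apply/subsetPn; exists i; first by rewrite inE.
by rewrite -suppE inE; apply: contra wi => /neg_part_eq0 ->.
Qed.

Lemma T_min_msupp_gens s (F : 'I_s -> {mpoly K[m]}) :
  (forall i, lattice_ideal L (F i)) ->
  (forall f, radical (lattice_ideal L) f ->
             radical (ideal_gen (fun g => exists i, g = F i)) f) ->
  exists i, exists2 M, M \in msupp (F i) & msupport M = E.
Proof.
move=> IF radF.
have [[M0 /(indispensable_pos_part HL) [w [Lw nz] eM0] suppE] _] := TE; subst M0.
case: (boolP [exists i, has (fun a => msupport a == E) (msupp (F i))]).
  by move=> /existsP [i /hasP [a ha /eqP sa]]; exists i, a.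
move=> /existsPn noE.
have F0 p : ideal_gen (fun g => exists i, g = F i) p -> mrestrict E p = 0.
  apply: rmorph_ideal_gen_eq0 => _ [i ->].
  apply: (mrestrict_lattice_ideal_eq0 (IF i)) => a ha.
  by apply: contra (noE i) => sa; apply/hasP; exists a.
have [k /F0] : radical (ideal_gen (fun g => exists i, g = F i)) (lbinom K w).
  by apply: radF; exists 1%N; rewrite expr1; apply: ideal_gen_mem; exists w.
rewrite rmorphXn /= (mrestrict_lbinom Lw nz suppE) mpolyXn.
by move=> /(congr1 (mcoeff (pos_part w *+ k))) /eqP; rewrite mcoeffX eqxx mcoeff0 oner_eq0.
Qed.

End MinimalSupport.

Theorem theorem2p9 (K : fieldType) (m : nat) (L : 'rV[int]_m -> Prop)
  (n : nat) (A : 'I_m -> 'rV[int]_n) (s : nat) (F : 'I_s -> {mpoly K[m]}) :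
  is_lattice L ->
  (exists2 u, L u & u != 0) ->
  (forall u, L u -> (forall i, 0 <= u ord0 i) -> u = 0) ->
  (forall q : 'rV[int]_m, saturation L q <-> \sum_(i < m) q ord0 i *: A i = 0) ->
  (forall i, lattice_ideal L (F i)) ->
  (forall f : {mpoly K[m]}, radical (lattice_ideal L) f <->
             radical (ideal_gen (fun g => exists i, g = F i)) f) ->
  spanning_subcomplex (complex_union (fun i => Gamma_F L A (F i))) (Gamma K L A).
Proof.
move=> HL _ Lpos _ IF radF; split; first by move=> sigma [i [G _]].
move=> E; split; first by case=> i [G _].
move=> G; have TE : T_min K L E by case: G => vertE _; apply: vertE; rewrite inE.
have [i [M FiM suppM]] := T_min_msupp_gens HL TE Lpos IF (fun f => proj1 (radF f)).
exists i; split=> // E'; rewrite inE => /eqP ->.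
by split=> //; exists M.
Qed.
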